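(* Let $({\cal A},{\cal A}_0)$ be a locally convex quasi *-algebra with identity and topology $\tau$, let $\omega_0$ be a positive linear functional on ${\cal A}_0$ with $\omega_0(a^*a)\le p(a)^2$ for all $a\in{\cal A}_0$ for some $\tau$-continuous seminorm $p$, and let $\omega=\tilde\omega_0$ be its continuous extension to ${\cal A}$, with GNS construction $(\pi_\omega,\lambda_\omega,{\cal H}_\omega)$. If $x\in{\cal A}$ and $\{x_\alpha\}\subset{\cal A}_0$ is a net with $\tau$-$\lim_\alpha x_\alpha=x$, then $\lambda_\omega(x_\alpha)=\lambda_{\omega_0}(x_\alpha)\to\lambda_\omega(x)$ in ${\cal H}_\omega$.
   Context: A locally convex quasi *-algebra $({\cal A},{\cal A}_0)$: ${\cal A}_0$ is a *-algebra with a locally convex topology $\tau$ making the involution and the multiplications $a\mapsto ab$, $a\mapsto ba$ ($b\in{\cal A}_0$) continuous, ${\cal A}$ is the $\tau$-completion, with the involution and the products $ax,xa$ ($a\in{\cal A}$, $x\in{\cal A}_0$) extended by continuity. The functional $\omega$ is representable, and its GNS construction consists of a Hilbert space ${\cal H}_\omega$, a linear map $\lambda_\omega:{\cal A}\to{\cal H}_\omega$ with $\lambda_\omega({\cal A}_0)$ dense and $\langle\lambda_\omega(x),\lambda_\omega(a)\rangle=\omega(a^*x)$ for $x\in{\cal A}$, $a\in{\cal A}_0$, and a *-representation $\pi_\omega$ with domain $\lambda_\omega({\cal A}_0)$ satisfying $\pi_\omega(x)\lambda_\omega(a)=\lambda_\omega(xa)$; $\lambda_{\omega_0}$ denotes the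 GNS map of $\omega_0$ on ${\cal A}_0$, which coincides with $\lambda_\omega$ on ${\cal A}_0$. *)

From HB Require Import structures.
From mathcomp Require Import all_boot all_order all_algebra.
From mathcomp Require Import all_classical all_reals all_analysis.
From mathcomp Require Import complex.

Set Implicit Arguments.
Unset Strict Implicit.
Unset Printing Implicit Defensive.

Import Order.TTheory GRing.Theory Num.Theory.
Import numFieldTopology.Exports numFieldNormedType.Exports.

Local Open Scope classical_set_scope.
Local Open Scope ring_scope.
Local Open Scope complex_scope.

(** Directed sets and nets.  A net indexed by a directed set (I, le) converges
    iff its image of the filter of tails converges. *)
Definition directed_set (I : Type) (le : I -> I -> Prop) : Prop :=
  [/\ (exists i : I, True),
      (forall i, le i i),
      (forall i j k, le i j -> le j k -> le i k) &
      (forall i j, exists k, le i k /\ le j k)].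

Definition tails (I : Type) (le : I -> I -> Prop) : set_system I :=
  [set S | exists i, forall j, le i j -> S j].

Definition tvs_cauchy (K : numDomainType) (E : tvsType K) (F : set_system E) : Prop :=
  forall U : set E, nbhs (0 : E) U ->
    exists2 S : set E, F S & forall x y, S x -> S y -> U (x - y).

Definition tvs_complete (K : numDomainType) (E : tvsType K) : Prop :=
  forall F : set_system E, ProperFilter F -> tvs_cauchy F -> exists l : E, F --> l.

(** Locally convex quasi *-algebra (A, A0) over C = R[i] with identity:
    A is a locally convex space (tvsType), A0 a linear subspace of A which is a
    *-algebra for the restriction of [mul] and [star], the products [mul x a],
    [mul a x] (x in A, a in A0) and the involution [star] are defined on A;
    A is complete and A0 is dense in A (A is the completion of (A0, tau), tau
    being the topology induced on A0), the involution and the multiplications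
    by elements of A0 are continuous.  The values of [mul x y] when neither x
    nor y lies in A0 are irrelevant (never constrained). *)
Definition lc_quasi_star_algebra_with_identity (R : realType)
    (A : tvsType R[i]) (A0 : set A) (mul : A -> A -> A) (star : A -> A)
    (e : A) : Prop :=
      A0 0 /\ (forall (c : R[i]) a b, A0 a -> A0 b -> A0 (c *: a + b)) /\
      (forall a b, A0 a -> A0 b -> A0 (mul a b)) /\ (forall a, A0 a -> A0 (star a)) /\ A0 e /\
      (forall a, A0 a -> forall (c : R[i]) x y,
          mul a (c *: x + y) = c *: mul a x + mul a y /\
          mul (c *: x + y) a = c *: mul x a + mul y a) /\
      (forall a b x, A0 a -> A0 b ->
          [/\ mul a (mul b x) = mul (mul a b) x,
              mul a (mul x b) = mul (mul a x) b &
              mul x (mul a b) = mul (mul x a) b]) /\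
      (forall x, mul e x = x /\ mul x e = x) /\
      (forall (c : R[i]) x y, star (c *: x + y) = c^* *: star x + star y) /\
      (forall x, star (star x) = x) /\
      (forall a x, A0 a -> star (mul a x) = mul (star x) (star a) /\
                           star (mul x a) = mul (star a) (star x)) /\
      continuous star /\
      (forall a, A0 a -> continuous (fun x => mul a x) /\ continuous (fun x => mul x a)) /\
      tvs_complete A /\ (forall x : A, closure A0 x).

(** Inner product on a normed space whose norm it induces
    (a Hilbert space is a complete normed space with such an inner product);
    linear in the first argument, conjugate-linear in the second. *)
Definition is_inner_product (R : realType) (H : normedModType R[i])
    (ip : H -> H -> R[i]) : Prop :=
  [/\ (forall (c : R[i]) u v w, ip (c *: u + v) w = c * ip u w + ip v w),
      (forall u v, ip v u = (ip u v)^*) &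
      (forall u, ip u u = `|u| ^+ 2)].

Definition seminorm_on (R : realType) (A : tvsType R[i]) (A0 : set A) (p : A -> R) : Prop :=
  forall a b (c : R[i]), A0 a -> A0 b ->
    [/\ 0 <= p a, p (a + b) <= p a + p b & (p (c *: a))%:C = `|c| * (p a)%:C].

From HB Require Import structures.
From mathcomp Require Import all_boot all_order all_algebra.
From mathcomp Require Import all_classical all_reals all_analysis.
From mathcomp Require Import complex ring.

Set Implicit Arguments.
Unset Strict Implicit.
Unset Printing Implicit Defensive.

Import Order.TTheory GRing.Theory Num.Theory.
Import numFieldTopology.Exports numFieldNormedType.Exports.
Local Open Scope classical_set_scope.
Local Open Scope ring_scope.
Local Open Scope complex_scope.

(* On A0 the GNS vectors satisfy |lam a|^2 = omega (a^* a) <= p a ^ 2, so lam turns the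
   tau-Cauchy net (x_alpha) into a Cauchy net of H, which converges to some v.  Pairing with
   lam b, b in A0, and using the continuity of omega and of left multiplication by b^*,
   <v, lam b> = lim omega (b^* x_alpha) = omega (b^* x) = <lam x, lam b>; as lam(A0) is dense
   in H, v = lam x. *)

Section InnerProduct.
Variables (R : realType) (H : normedModType R[i]) (ip : H -> H -> R[i]).
Hypothesis hip : is_inner_product ip.

Lemma ipC u v : ip v u = (ip u v)^*.
Proof. by case: hip. Qed.

Lemma ip_norm u : ip u u = `|u| ^+ 2.
Proof. by case: hip. Qed.

Lemma ip0l w : ip 0 w = 0.
Proof.
case: hip => hl _ _; have := hl 1 0 0 w.
by rewrite scale1r addr0 mul1r -{1}[ip 0 w]addr0 => /addrI <-.
Qed.

Lemma ipZl c u w : ip (c *: u) w = c * ip u w.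
Proof. by case: hip => hl _ _; rewrite -[c *: u]addr0 hl ip0l addr0. Qed.

Lemma ipDl u v w : ip (u + v) w = ip u w + ip v w.
Proof. by case: hip => hl _ _; rewrite -[u]scale1r hl mul1r scale1r. Qed.

Lemma ipBl u v w : ip (u - v) w = ip u w - ip v w.
Proof. by rewrite -scaleN1r ipDl ipZl mulN1r. Qed.

Lemma ipZr c u w : ip w (c *: u) = c^* * ip w u.
Proof. by rewrite ipC ipZl rmorphM /= -ipC. Qed.

Lemma ipDr u v w : ip w (u + v) = ip w u + ip w v.
Proof. by rewrite ipC ipDl rmorphD /= -!ipC. Qed.

Lemma norm_le_ip (u : H) (r : R) : 0 <= r -> ip u u <= (r ^+ 2)%:C -> `|u| <= r%:C.
Proof.
move=> r0; rewrite ip_norm => le_ur.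
by rewrite -(@ler_pXn2r _ 2) ?nnegrE ?ler0c ?normr_ge0 // -rmorphXn.
Qed.

Definition polarization (u v : H) : R[i] :=
  4^-1 * (`|u + v| ^+ 2 - `|u - v| ^+ 2
          + 'i * `|u + 'i *: v| ^+ 2 - 'i * `|u - 'i *: v| ^+ 2).

Lemma ip_polarization u v : ip u v = polarization u v.
Proof.
have sqr_norm c c' w : w = c *: v -> conjc c = c' -> `|u + w| ^+ 2 =
    ip u u + c * ip v u + c' * ip u v + c * c' * ip v v.
  by move=> -> <-; rewrite -ip_norm ipDl !ipDr !ipZl !ipZr; ring.
have conj_i : conjc 'i%R = - 'i%R :> R[i] := @conjCi _.
have sqr_i : 'i%R * 'i%R = (-1)%R :> R[i] by rewrite -expr2 sqrCi.
rewrite /polarization (sqr_norm 1%R 1%R v) ?scale1r ?rmorph1 //.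
rewrite (sqr_norm (-1)%R (-1)%R (- v)) ?scaleN1r ?rmorphN1 //.
rewrite (sqr_norm 'i%R (- 'i)%R) ?conj_i //.
rewrite (sqr_norm (- 'i)%R 'i%R) ?scaleNr //; last first.
  by apply: oppr_inj; rewrite -rmorphN opprK; exact: conj_i.
(* The four squared norms sum to [4 * ip u v] plus a multiple of [1 + 'i * 'i]. *)
move: sqr_i; set j := ('i%R : R[i]); clearbody j => sqr_j.
apply/eqP; rewrite -subr_eq0; apply/eqP.
rewrite [LHS](_ : _ = 2^-1 * (1 + j * j) * (ip u v - ip v u)); last by field.
by rewrite sqr_j addrN mulr0 mul0r.
Qed.

(* Limits of scalars are taken in the normed-field topology of [R[i]]. *)
Let C := (R[i] : numFieldType).

Lemma cvg_sqr_norm (T : Type) (F : set_system T) {FF : Filter F} (f : T -> H) a :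
  f @ F --> a -> (fun t => `|f t| ^+ 2 : C) @ F --> (`|a| ^+ 2 : C).
Proof.
by move=> fa; rewrite expr2; under eq_fun do rewrite expr2; apply: cvgM; exact: cvg_norm.
Qed.

Lemma cvg_ip (T : Type) (F : set_system T) {FF : Filter F} (f g : T -> H) a b :
  f @ F --> a -> g @ F --> b -> (fun t => ip (f t) (g t) : C) @ F --> (ip a b : C).
Proof.
move=> fa gb; rewrite ip_polarization; under eq_fun do rewrite ip_polarization.
apply: cvgMl_tmp; apply: cvgB; [apply: cvgD; [apply: cvgB|]|]; try apply: cvgMl_tmp;
  apply: cvg_sqr_norm; [exact: cvgD|exact: cvgB|apply: cvgD|apply: cvgB] => //;
  exact: cvgZl_tmp.
Qed.

Lemma cvg_ip_unique (T : Type) (F : set_system T) {PF : ProperFilter F} (f : T -> H) a u (c : C) :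
  f @ F --> a -> (fun t => ip (f t) u : C) @ F --> c -> ip a u = c.
Proof.
move=> fa fuc.
have fua : (fun t => ip (f t) u : C) @ F --> (ip a u : C) by exact: cvg_ip fa (cvg_cst u).
exact: (cvg_unique _ fua fuc).
Qed.

Lemma dense_orthogonal_eq0 (D : set H) z :
  (forall v, closure D v) -> (forall d, D d -> ip z d = 0) -> z = 0.
Proof.
move=> denseD zD; have := denseD z; rewrite closureEcvg => -[G PG [Gz GD]].
apply/eqP; rewrite -normr_eq0 -sqrf_eq0 -ip_norm; apply/eqP.
apply: (cvg_ip_unique (f := id) Gz); apply: cvg_trans (cvg_cst (F := G) (0 : C)).
apply: near_eq_cvg; apply: filterS (GD _ (fun _ x => x)) => d /zD zd.
by rewrite ipC zd rmorph0.
Qed.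

End InnerProduct.

Lemma tails_proper_filter (I : Type) (le : I -> I -> Prop) :
  directed_set le -> ProperFilter (tails le).
Proof.
case=> [[i0 _] le_refl le_trans le_dir].
constructor; first by case=> i /(_ i (le_refl i)).
constructor; first by exists i0.
- move=> P Q [i Pi] [j Qj]; have [k [le_ik le_jk]] := le_dir i j.
  by exists k => m le_km; split; [apply: Pi; exact: le_trans le_km|apply: Qj; exact: le_trans le_km].
- by move=> P Q PQ [i Pi]; exists i => j /Pi /PQ.
Qed.

Lemma cvg_tvs_cauchy (K : numDomainType) (E : tvsType K) (F : set_system E)
    {FF : Filter F} (l : E) :
  F --> l -> tvs_cauchy F.
Proof.
move=> Fl U U0; have : nbhs ((l, l).1 - (l, l).2) U by rewrite subrr.
move=> /sub_continuous [[P Q] /= [Pl Ql] PQ].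
exists (P `&` Q); first exact: filterI (Fl _ Pl) (Fl _ Ql).
by move=> x y [Px _] [_ Qy]; exact: (PQ (x, y)).
Qed.

Section Seminorm.
Variables (R : realType) (A : tvsType R[i]) (A0 : set A) (p : A -> R).
Hypotheses (A00 : A0 0) (hp : seminorm_on A0 p).

Lemma seminorm0 : p 0 = 0.
Proof.
have [_ _] := @hp 0 0 0 A00 A00.
by rewrite scaler0 normr0 mul0r => /complexI.
Qed.

Lemma seminorm_lt_near0 (hpc : {within A0, continuous p}) (e : R[i]) :
  0 < e -> nbhs (0 : A) [set y | A0 y -> (p y)%:C < e].
Proof.
move=> e0; have e_real : e = (complex.Re e)%:C by rewrite RRe_real // gtr0_real.
have d0 : 0 < complex.Re e by rewrite -ltcR -e_real.
have := hpc (0 : subspace A0) _ (nbhsx_ballx (p 0) (complex.Re e) d0).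
case: (nbhs_subspaceP A0 (0 : subspace A0)) => // _ /= p_near.
have {}p_near : nbhs (0 : A) [set y | A0 y -> ball (p 0) (complex.Re e) (p y)] := p_near.
apply: filterS p_near => y p_y Ay; rewrite e_real ltcR.
move: (p_y Ay); rewrite -ball_normE /ball_ /= seminorm0 sub0r normrN.
exact: le_lt_trans (ler_norm _).
Qed.

End Seminorm.

Lemma cauchy_map_dominated (R : realType) (A : tvsType R[i]) (A0 : set A) (p : A -> R)
    (H : normedModType R[i]) (f : A -> H) (F : set_system A) {PF : ProperFilter F} :
  A0 0 -> seminorm_on A0 p -> {within A0, continuous p} ->
  (forall a b, A0 a -> A0 b -> A0 (a - b)) ->
  (forall a b, A0 a -> A0 b -> `|f a - f b| <= (p (a - b))%:C) ->
  F A0 -> tvs_cauchy F -> cauchy (f @ F).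
Proof.
move=> A00 hp hpc A0B f_le FA0 cauchyF; apply: cauchy_exP => e e0.
have [S FS S_small] := cauchyF _ (seminorm_lt_near0 A00 hp hpc e0).
have [a [Sa A0a]] := filter_ex (filterI FS FA0).
exists (f a); apply: (@filterS _ F PF _ _ _ (filterI FS FA0)) => b [Sb A0b].
rewrite /= -ball_normE /ball_ /=.
exact: le_lt_trans (f_le a b A0a A0b) (S_small a b Sa Sb (A0B a b A0a A0b)).
Qed.

Theorem lemma9
  (R : realType)
  (* the locally convex quasi *-algebra (A, A0) with identity e *)
  (A : tvsType R[i]) (A0 : set A) (mul : A -> A -> A) (star : A -> A) (e : A)
  (hA : lc_quasi_star_algebra_with_identity A0 mul star e)
  (* omega0 : positive linear functional on A0, dominated by a continuous seminorm p *)
  (omega0 : A -> R[i]) (p : A -> R)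
  (h0lin : forall (c : R[i]) a b, A0 a -> A0 b ->
             omega0 (c *: a + b) = c * omega0 a + omega0 b)
  (h0pos : forall a, A0 a -> 0 <= omega0 (mul (star a) a))
  (hp : seminorm_on A0 p) (hpc : {within A0, continuous p})
  (hbound : forall a, A0 a -> omega0 (mul (star a) a) <= ((p a) ^+ 2)%:C)
  (* omega : the continuous (linear) extension of omega0 to A *)
  (omega : A -> R[i]^o)
  (homlin : forall (c : R[i]) x y, omega (c *: x + y) = c * omega x + omega y)
  (homc : continuous omega)
  (hext : forall a, A0 a -> omega a = omega0 a)
  (* GNS construction of omega: Hilbert space H, map lam, representation pi *)
  (H : completeNormedModType R[i]) (ip : H -> H -> R[i])
  (hip : is_inner_product ip)
  (lam : A -> H)
  (hlamlin : forall (c : R[i]) x y, lam (c *: x + y) = c *: lam x + lam y)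
  (hdense : forall v : H, closure (lam @` A0) v)
  (hgns : forall x a, A0 a -> ip (lam x) (lam a) = omega (mul (star a) x))
  (pi : A -> H -> H)
  (hpi : forall x a, A0 a -> pi x (lam a) = lam (mul x a))
  (* GNS map of omega0 on A0, coinciding with lam on A0 *)
  (lam0 : A -> H)
  (hlam0 : forall a b, A0 a -> A0 b -> ip (lam0 a) (lam0 b) = omega0 (mul (star b) a))
  (hlam0co : forall a, A0 a -> lam0 a = lam a)
  (* a net (x_alpha) in A0 indexed by the directed set (I, le), tau-converging to x *)
  (x : A) (I : Type) (le : I -> I -> Prop) (hI : directed_set le)
  (xa : I -> A) (hxa : forall i, A0 (xa i))
  (hcv : xa @ tails le --> x) :
  (forall i, lam (xa i) = lam0 (xa i)) /\ (lam \o xa @ tails le --> lam x).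
Proof.
split=> [i|]; first by rewrite hlam0co.
case: hA => A00 [A0_lin [A0_mul [A0_star [_ [_ [_ [_ [_ [_ [_ [_ [mul_cont _]]]]]]]]]]]].
have A0B a b : A0 a -> A0 b -> A0 (a - b).
  by move=> A0a A0b; rewrite -scaleN1r addrC; exact: A0_lin.
have lamB a b : lam (a - b) = lam a - lam b.
  by rewrite -scaleN1r addrC hlamlin scaleN1r addrC.
have PF := tails_proper_filter hI.
have lam_le a : A0 a -> `|lam a| <= (p a)%:C.
  move=> A0a; have [p_ge0 _ _] := @hp a a 0 A0a A0a.
  have A0_aa : A0 (mul (star a) a) by exact: A0_mul (A0_star _ A0a) A0a.
  by apply: (norm_le_ip hip) p_ge0 _; rewrite hgns // hext // hbound.
set v := lim (lam \o xa @ tails le).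
have lam_xa_cvg : lam \o xa @ tails le --> v.
  apply: cauchy_cvg; apply: (cauchy_map_dominated A00 hp hpc A0B) (cvg_tvs_cauchy hcv).
  - by move=> a b A0a A0b; rewrite -lamB; exact/lam_le/A0B.
  - exact: (@filterE _ (tails le) PF (xa @^-1` A0) hxa).
suff -> : lam x = v by [].
apply/eqP; rewrite eq_sym -subr_eq0; apply/eqP.
apply: (dense_orthogonal_eq0 hip hdense) => _ [b A0b <-].
have ip_v : ip v (lam b) = ip (lam x) (lam b).
  rewrite hgns //; apply: (cvg_ip_unique hip lam_xa_cvg).
  rewrite (_ : (fun t => _) = omega \o mul (star b) \o xa); last by apply: funext => t; rewrite /= hgns.
  apply: cvg_comp hcv _; exact: continuous_comp ((mul_cont _ (A0_star _ A0b)).1 x) (homc _).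
by rewrite (ipBl hip) ip_v subrr.
Qed.
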